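(* Let $G$ be a finite simple connected graph with exactly $h$ holes. Suppose that all the holes in $G$ are pairwise edge-disjoint and that $G$ has exactly one non-edge maximal clique $K$. If, for some edge $e$ of a hole $H$ of $G$, the graph $G-e$ has at least $h$ holes, then $e$ is an edge of $K$. Moreover, in that case, writing $e=v_iv_j$, every hole of $G-e$ which is not a hole of $G$ has the form $(H-v_iv_j)\cup\{v_iv_k,v_jv_k\}$ for some vertex $v_k$ of $K$.
   Context: A hole of a graph is an induced (chordless) cycle of length at least $4$. A clique is a complete subgraph; a clique is non-edge if it has at least $3$ vertices. $G-e$ denotes the graph obtained from $G$ by deleting the edge $e$. *)

From Stdlib Require Import ClassicalEpsilon.
From mathcomp Require Import all_boot.
Set Implicit Arguments. Unset Strict Implicit. Unset Printing Implicit Defensive.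

Definition simple_graph (T : finType) (g : rel T) :=
  symmetric g /\ irreflexive g.

Definition connected_graph (T : finType) (g : rel T) :=
  forall x y : T, connect g x y.

(* A hole: induced (chordless) cycle of length >= 4.  Since an induced
   subgraph is determined by its vertex set, a hole is recorded by its
   vertex set S: S can be listed (without repetition) as a cycle p of
   length >= 4 of g, and every edge of g between vertices of S joins
   cycle-consecutive vertices (no chords). *)
Definition is_hole (T : finType) (g : rel T) (S : {set T}) : Prop :=
  exists p : seq T,
    [/\ uniq p, S =i p, 4 <= size p, cycle g p &
        forall x y, x \in p -> y \in p -> g x y -> (y == next p x) || (y == prev p x)].

Definition holes (T : finType) (g : rel T) : {set {set T}} :=
  [set S : {set T} | if excluded_middle_informative (is_hole g S) then true else false].

Definition hole_edges (T : finType) (g : rel T) (S : {set T}) : {set T * T} :=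
  [set p : T * T | [&& p.1 \in S, p.2 \in S & g p.1 p.2]].

Definition is_clique (T : finType) (g : rel T) (K : {set T}) : Prop :=
  forall x y, x \in K -> y \in K -> x != y -> g x y.

Definition is_maximal_clique (T : finType) (g : rel T) (K : {set T}) : Prop :=
  is_clique g K /\ forall K' : {set T}, is_clique g K' -> K \subset K' -> K' = K.

Definition non_edge_clique (T : finType) (K : {set T}) : Prop := 3 <= #|K|.

Definition del_edge (T : finType) (g : rel T) (a b : T) : rel T :=
  fun x y => g x y && ~~ (((x == a) && (y == b)) || ((x == b) && (y == a))).

(* Deleting ab destroys H, so if g - ab still has at least as
   many holes as g, it has a new hole H'.  Such an H' must pass through a
   and b (otherwise it is already a hole of g); it splits into two sides
   joining a to b.  A side with at least two inner vertices, closed by ab,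
   is a hole of g through ab, i.e. H itself; both sides cannot be H, so
   one side is a single vertex k.  Then a, k, b form a triangle, which lies
   in K; the other side has at least two inner vertices (a single one
   would also lie in K and be adjacent to k), so it is H minus the edge
   ab, and H' = H + k. *)

From Stdlib Require Import ClassicalEpsilon.
From mathcomp Require Import all_boot.
Set Implicit Arguments. Unset Strict Implicit. Unset Printing Implicit Defensive.

Section Cycles.
Variable T : finType.
Implicit Types (e g : rel T) (p q s : seq T) (x y : T).

Definition nbhd e p x : {set T} := [set y | (y \in p) && e x y].

Lemma in_nbhd e p x y : (y \in nbhd e p x) = (y \in p) && e x y.
Proof. by rewrite inE. Qed.

Lemma eq_nbhd e p q x : p =i q -> nbhd e p x = nbhd e q x.
Proof. by move=> pq; apply/setP => y; rewrite !in_nbhd pq. Qed.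

Lemma next_neq_prev p x : uniq p -> 3 <= size p -> x \in p -> next p x != prev p x.
Proof.
move=> Up Sp xp; case: (rot_to xp) => i s rE.
rewrite -(next_rot i Up) -(prev_rot i Up) rE.
have Ux : uniq (x :: s) by rewrite -rE rot_uniq.
have Sx : 3 <= size (x :: s) by rewrite -rE size_rot.
case: s {rE} Ux Sx => [|y [|z t]] // Ux _; apply/negP => /eqP nx_px.
have := next_prev Ux x; rewrite -nx_px /= eqxx.
have -> : (y == x) = false by apply: contraTF Ux => /eqP ->; rewrite /= inE eqxx.
by rewrite eqxx => zx; move: Ux; rewrite /= zx !inE eqxx !orbT.
Qed.

Lemma next_prev_nbhd e p x : symmetric e -> cycle e p -> x \in p ->
  next p x \in nbhd e p x /\ prev p x \in nbhd e p x.
Proof.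
move=> Se Cp xp; rewrite !in_nbhd mem_next mem_prev xp next_cycle //.
by rewrite Se prev_cycle.
Qed.

Lemma cycle_nbhd_ge2 e p x : symmetric e -> uniq p -> 3 <= size p -> cycle e p ->
  x \in p -> 2 <= #|nbhd e p x|.
Proof.
move=> Se Up Sp Cp xp; have [nx px] := next_prev_nbhd Se Cp xp.
have <- : #|[set next p x; prev p x]| = 2 by rewrite cards2 next_neq_prev.
by apply/subset_leq_card/subsetP => y; rewrite in_set2 => /orP [] /eqP ->.
Qed.

Definition induced_cycle e p :=
  [&& uniq p, 4 <= size p, cycle e p & all (fun x => #|nbhd e p x| <= 2) p].

Lemma induced_cycle_rot e p i : induced_cycle e (rot i p) = induced_cycle e p.
Proof.
rewrite /induced_cycle rot_uniq size_rot rot_cycle (eq_all_r (mem_rot i p)).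
by congr [&& _, _, _ & _]; apply: eq_all => x; rewrite (eq_nbhd _ _ (mem_rot i p)).
Qed.

Lemma induced_cycle_rev e p : symmetric e -> induced_cycle e (rev p) = induced_cycle e p.
Proof.
move=> Se; rewrite /induced_cycle rev_uniq size_rev rev_cycle all_rev.
rewrite (eq_cycle (e' := e)) => [|x y]; last by rewrite Se.
by congr [&& _, _, _ & _]; apply: eq_all => x; rewrite (eq_nbhd _ _ (mem_rev p)).
Qed.

Lemma reverse_cycle_eq x (s1 s2 : seq T) y :
  rotr 1 (rev (x :: s1 ++ y :: s2)) = x :: rev s2 ++ y :: rev s1.
Proof. by rewrite rev_cons rotr1_rcons rev_cat rev_cons cat_rcons. Qed.

Lemma induced_cycle_reverse e x (s1 s2 : seq T) y : symmetric e ->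
  induced_cycle e (x :: s1 ++ y :: s2) = induced_cycle e (x :: rev s2 ++ y :: rev s1).
Proof. by move=> Se; rewrite -reverse_cycle_eq induced_cycle_rot induced_cycle_rev. Qed.

Lemma mem_reverse_cycle x (s1 s2 : seq T) y : x :: s1 ++ y :: s2 =i x :: rev s2 ++ y :: rev s1.
Proof. by move=> u; rewrite -reverse_cycle_eq mem_rot mem_rev. Qed.

(* Holes are exactly the vertex sets of induced cycles: the no-chord
   condition amounts to every vertex having degree at most 2 on the cycle. *)
Lemma holeP e S : symmetric e -> is_hole e S <-> exists2 p, S =i p & induced_cycle e p.
Proof.
move=> Se; split.
  case=> p [Up Sp Zp Cp Hp]; exists p; rewrite // /induced_cycle Up Zp Cp.
  apply/allP => x xp; apply: (@leq_trans #|[set next p x; prev p x]|).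
    by apply/subset_leq_card/subsetP => y; rewrite in_nbhd in_set2 => /andP [yp]; apply: Hp.
  by rewrite cards2; case: (_ != _).
case=> p Sp /and4P [Up Zp Cp /allP Dp]; exists p; split=> // x y xp yp exy.
apply: contraTT (Dp x xp); rewrite negb_or -ltnNge => /andP [ny py].
have [nx px] := next_prev_nbhd Se Cp xp.
have Zp3 : 3 <= size p := ltnW Zp.
suff <- : #|[set next p x; prev p x; y]| = 3.
  apply/subset_leq_card/subsetP => z; rewrite !in_setU !in_set1 -!orbA => /or3P [] /eqP -> //.
  by rewrite in_nbhd yp.
by rewrite -setUA cardsU1 cards2 in_set2 negb_or next_neq_prev // eq_sym ny eq_sym py.
Qed.

Lemma in_holes e S : (S \in holes e) <-> is_hole e S.
Proof. by rewrite inE; case: excluded_middle_informative. Qed.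

Lemma in_hole_edges e S u v : ((u, v) \in hole_edges e S) = [&& u \in S, v \in S & e u v].
Proof. by rewrite inE. Qed.

End Cycles.

(* If B is at least as large as A but misses some element of A, then B
   has an element outside A; this is how a new hole is found. *)
Lemma card_new_element (T : finType) (A B : {set T}) x :
  #|A| <= #|B| -> x \in A -> x \notin B -> exists2 y, y \in B & y \notin A.
Proof.
move=> AB xA xB; case: (boolP (B \subset A)) => [BA | /subsetPn //].
have /proper_card : B \proper A by apply/properP; split=> //; exists x.
by rewrite ltnNge AB.
Qed.

Section Cliques.
Variables (T : finType) (g : rel T) (K : {set T}).
Hypotheses (Sg : symmetric g) (Ig : irreflexive g).

(* Boolean version of is_clique, needed to pick a largest clique. *)
Definition cliqueb (C : {set T}) := [forall x in C, forall y in C, (x != y) ==> g x y].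

Lemma cliqueP C : reflect (is_clique g C) (cliqueb C).
Proof.
apply: (iffP forall_inP) => [C_cl x y xC yC | C_cl x xC].
  by move/forall_inP/(_ y yC)/implyP: (C_cl x xC).
by apply/forall_inP => y yC; apply/implyP; apply: C_cl.
Qed.

(* Every clique extends to a maximal one: take a largest clique containing it. *)
Lemma maximal_clique_exists C : is_clique g C ->
  exists2 M, is_maximal_clique g M & C \subset M.
Proof.
move=> /cliqueP C_cl.
have CC : cliqueb C && (C \subset C) by rewrite C_cl subxx.
case: (@arg_maxnP _ C (fun M => cliqueb M && (C \subset M)) (fun M => #|M|) CC).
move=> M /andP [M_cl CM] M_max.
exists M => //; split=> [|M' /cliqueP M'_cl MM']; first exact/cliqueP.
apply/eqP; rewrite eq_sym eqEcard MM' /=; apply: M_max; rewrite M'_cl.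
exact: subset_trans CM MM'.
Qed.

Hypothesis K_unique : forall K', is_maximal_clique g K' -> non_edge_clique K' -> K' = K.

(* Since K is the only maximal clique with at least 3 vertices, every
   triangle of g lies in K. *)
Lemma triangle_in_clique x y z : g x y -> g y z -> g x z -> [/\ x \in K, y \in K & z \in K].
Proof.
move=> gxy gyz gxz.
have neq u v : g u v -> u != v by move=> guv; apply: contraTneq guv => ->; rewrite Ig.
have tri : is_clique g [set x; y; z].
  move=> u v; rewrite !in_setU !in_set1 -!orbA.
  by move=> /or3P [] /eqP -> /or3P [] /eqP ->; rewrite ?eqxx // => _; rewrite // Sg.
have [M M_max triM] := maximal_clique_exists tri.
have <- : M = K.
  apply: K_unique => //; apply: leq_trans (subset_leq_card triM).
  by rewrite -setUA cardsU1 cards2 in_set2 negb_or neq // neq // neq.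
by split; apply: (subsetP triM); rewrite !in_setU !in_set1 eqxx ?orbT.
Qed.

End Cliques.

Lemma nbhd_subpath_le (T : finType) (e g : rel T) (c r : seq T) u o w :
  {subset c <= r} -> w \in nbhd e r u -> w \notin c ->
  {in c, forall v, g u v -> v != o -> e u v} -> #|nbhd g c u| <= #|nbhd e r u|.
Proof.
move=> cr wN wc g_e.
have sub : nbhd g c u \subset o |: (nbhd e r u :\ w).
  apply/subsetP => v; rewrite in_nbhd => /andP [vc guv].
  rewrite in_setU1 in_setD1; case: eqVneq => //= vo.
  by rewrite in_nbhd cr ?g_e //= andbT; apply: contraNneq wc => <-.
apply: leq_trans (subset_leq_card sub) _.
by rewrite cardsU1 (cardsD1 w (nbhd e r u)) wN leq_add2r leq_b1.
Qed.

Section DeletedEdge.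
Variables (T : finType) (g : rel T) (a b : T).
Hypothesis Sg : symmetric g.
Local Notation e := (del_edge g a b).

Lemma del_edge_sym : symmetric e.
Proof.
by move=> u v; rewrite /del_edge Sg orbC [(v == a) && _]andbC [(v == b) && _]andbC.
Qed.

Lemma del_edge_sub : subrel e g.
Proof. by move=> u v /andP []. Qed.

Lemma del_edge_ba : e b a = false.
Proof. by rewrite /del_edge !eqxx orbT andbF. Qed.

Lemma del_edge_split_nonempty s1 s2 : cycle e (a :: s1 ++ b :: s2) -> 0 < size s1.
Proof. by case: s1 => //= /andP []; rewrite del_edge_sym del_edge_ba. Qed.

Lemma del_edge_eq u v : ~~ ((u == a) && (v == b)) -> ~~ ((u == b) && (v == a)) -> e u v = g u v.
Proof. by move=> nab nba; rewrite /del_edge negb_or nab nba !andbT. Qed.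

Lemma nbhd_del_edge p u : ~~ ((a \in p) && (b \in p)) -> u \in p -> nbhd e p u = nbhd g p u.
Proof.
move=> abN up; apply/setP => v; rewrite !in_nbhd; case vp: (v \in p) => //=.
by apply: del_edge_eq; apply: contraNN abN => /andP [/eqP <- /eqP <-]; rewrite ?up ?vp.
Qed.

Lemma hole_del_edge_old S : is_hole e S -> ~~ ((a \in S) && (b \in S)) -> is_hole g S.
Proof.
move=> /(holeP _ del_edge_sym) [p Sp /and4P [Up Zp Cp /allP Dp]] abS.
have abp : ~~ ((a \in p) && (b \in p)) by rewrite -!Sp.
apply/(holeP _ Sg); exists p => //; rewrite /induced_cycle Up Zp (sub_cycle del_edge_sub Cp).
by apply/allP => u up; rewrite -nbhd_del_edge ?Dp.
Qed.

(* A hole of g through the edge ab is no hole of g - ab: a keeps at most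
   one neighbour on it. *)
Lemma hole_destroyed S : is_hole g S -> a \in S -> b \in S -> g a b -> ~ is_hole e S.
Proof.
move=> /(holeP _ Sg) [p Sp /and4P [_ _ _ /allP Dp]] aS bS gab.
move=> /(holeP _ del_edge_sym) [q Sq /and4P [Uq Zq Cq _]].
have aq : a \in q by rewrite -Sq.
have sub : nbhd e q a \subset nbhd g p a :\ b.
  apply/subsetP => v; rewrite in_setD1 !in_nbhd => /andP [vq eav].
  rewrite -Sp Sq vq (del_edge_sub eav) !andbT.
  by apply: contraTneq eav => ->; rewrite del_edge_sym del_edge_ba.
have := Dp a; rewrite -Sp aS (cardsD1 b) in_nbhd -Sp bS gab add1n ltnS => /(_ isT) le1.
have := leq_trans (subset_leq_card sub) le1.
by rewrite leqNgt (cycle_nbhd_ge2 del_edge_sym Uq (ltnW Zq) Cq aq).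
Qed.

Lemma closing_hole s1 s2 : g a b -> induced_cycle e (a :: s1 ++ b :: s2) ->
  2 <= size s1 -> is_hole g [set u in a :: s1 ++ [:: b]].
Proof.
set c := a :: s1 ++ [:: b] => gab /and4P [Ur _ Cr /allP Dr] s1_ge2.
case: s2 => [|z s2] in Ur Cr Dr *.
  by move: Cr; rewrite /= rcons_path last_cat /= del_edge_ba andbF.
set r := a :: s1 ++ b :: z :: s2 in Ur Cr Dr *.
have rE : r = c ++ z :: s2 by rewrite /r /c /= -catA.
have cr : {subset c <= r} by move=> u; rewrite rE mem_cat => ->.
have s2r : {subset z :: s2 <= r} by move=> u; rewrite rE mem_cat orbC => ->.
move: (Ur); rewrite rE cat_uniq => /and3P [Uc /hasPn s2c _].
have ab : a != b by move: Uc; rewrite /c /= mem_cat inE negb_or => /andP [/andP [_ ?] _].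
move: Cr; rewrite /r /= rcons_cat cat_path /= rcons_path => /and4P [Ps1 eb ez /andP [_ ea]].
apply/(holeP _ Sg); exists c; first by move=> u; rewrite inE.
have Zc : 4 <= size c by rewrite /c /= size_cat addn1 !ltnS.
have Cc : cycle g c.
  by rewrite /c /= rcons_cat cat_path /= (sub_path del_edge_sub Ps1) (del_edge_sub eb) Sg gab.
rewrite /induced_cycle Uc Zc Cc.
apply/allP => u uc; apply: leq_trans (Dr u (cr u uc)).
case: (eqVneq u a) => [-> | ua].
  apply: (nbhd_subpath_le (o := b) (w := last z s2) cr).
  - by rewrite in_nbhd s2r ?mem_last // del_edge_sym.
  - exact/s2c/mem_last.
  by move=> v _ gav vb; rewrite del_edge_eq // ?(negbTE vb) ?(negbTE ab) ?andbF.
case: (eqVneq u b) => [-> | ub].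
  apply: (nbhd_subpath_le (o := a) (w := z) cr).
  - by rewrite in_nbhd s2r ?mem_head.
  - exact/s2c/mem_head.
  by move=> v _ gbv va; rewrite del_edge_eq // ?(negbTE va) ?andbF // eq_sym (negbTE ab).
apply/subset_leq_card/subsetP => v; rewrite !in_nbhd => /andP [vc guv].
by rewrite cr // del_edge_eq // ?(negbTE ua) ?(negbTE ub).
Qed.

Lemma hole_edges_apex (S : {set T}) k : a \in S -> b \in S -> k \notin S ->
  {in k |: S, forall v, e k v = (v == a) || (v == b)} ->
  hole_edges e (k |: S) =
  ((hole_edges g S :\ (a, b)) :\ (b, a)) :|: [set (a, k); (k, a); (b, k); (k, b)].
Proof.
move=> aS bS kS ek.
have [ka kb] : k != a /\ k != b by split; apply: contraNneq kS => ->.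
apply/setP => [[u v]].
rewrite !(in_setU, in_setD1, in_set1, in_hole_edges, xpair_eqE) /=.
have apex_edge w : ((w == k) || (w \in S)) && e k w = (w == a) || (w == b).
  case: (boolP ((w == k) || (w \in S))) => wS; first by rewrite ek // in_setU in_set1.
  have [wa wb] : w != a /\ w != b by split; apply: contraNneq wS => ->; rewrite ?aS ?bS orbT.
  by rewrite (negbTE wa) (negbTE wb).
case: (eqVneq u k) => [-> | uk].
  by rewrite /= apex_edge (negbTE kS) (negbTE ka) (negbTE kb) /= orbF.
case: (eqVneq v k) => [-> | vk].
  have := apex_edge u; rewrite (negbTE uk) /= del_edge_sym andbT => ->.
  by rewrite (negbTE kS) (negbTE ka) (negbTE kb) /= !(andbF, orbF, andbT).
rewrite /del_edge /= !andbF !orbF negb_or.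
by case: (u \in S); case: (v \in S); case: (g u v);
  case: ((u == a) && (v == b)); case: ((u == b) && (v == a)).
Qed.

End DeletedEdge.

Section NewHoles.
Variables (T : finType) (g : rel T) (K H : {set T}) (a b : T).
Hypotheses (Sg : symmetric g) (Ig : irreflexive g) (gab : g a b)
  (K_clique : is_clique g K)
  (K_unique : forall K', is_maximal_clique g K' -> non_edge_clique K' -> K' = K)
  (H_unique : forall C, is_hole g C -> a \in C -> b \in C -> C = H).
Local Notation e := (del_edge g a b).
Let e_sym : symmetric e := del_edge_sym a b Sg.

Lemma mem_side (s : seq T) u : (u \in [set v in a :: s ++ [:: b]]) = [|| u == a, u \in s | u == b].
Proof. by rewrite inE in_cons mem_cat mem_seq1. Qed.

(* An induced cycle of g - ab through a and b has a single vertex strictly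
   between a and b on one of its sides: otherwise both sides, closed by ab,
   would be holes of g through ab, hence both equal to H. *)
Lemma split_cycle_short s1 s2 : induced_cycle e (a :: s1 ++ b :: s2) -> size s1 = 1 \/ size s2 = 1.
Proof.
move=> Ir; have Ir' := Ir; rewrite (induced_cycle_reverse _ _ _ _ e_sym) in Ir'.
have s1_pos : 0 < size s1 by case/and4P: Ir => _ _ /(del_edge_split_nonempty Sg).
have s2_pos : 0 < size s2.
  by case/and4P: Ir' => _ _ /(del_edge_split_nonempty Sg); rewrite size_rev.
case: (ltnP 1 (size s1)) => [s1_ge2 | ]; last by left; apply/eqP; rewrite eqn_leq s1_pos andbT.
case: (ltnP 1 (size s2)) => [s2_ge2 | ]; last by right; apply/eqP; rewrite eqn_leq s2_pos andbT.
have side_eq s : is_hole g [set v in a :: s ++ [:: b]] -> [set v in a :: s ++ [:: b]] = H.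
  by move=> hole; apply: H_unique; rewrite // mem_side eqxx ?orbT.
have H1 := side_eq _ (closing_hole Sg gab Ir s1_ge2).
have rs2_ge2 : 2 <= size (rev s2) by rewrite size_rev.
have H2 := side_eq _ (closing_hole Sg gab Ir' rs2_ge2).
case/and4P: Ir => Ur _ _ _; clear Ir' s1_pos.
case: s1 s1_ge2 Ur H1 => [|k s1] // _ Ur H1.
have : k \in [set v in a :: rev s2 ++ [:: b]] by rewrite H2 -H1 mem_side in_cons eqxx orbT.
move: Ur; rewrite /= !(in_cons, mem_cat, mem_rev, mem_side) !negb_or.
case/and3P => /and4P [ak _ _ _] /and3P [_ kb ks2] _.
by rewrite eq_sym (negbTE ak) (negbTE kb) (negbTE ks2).
Qed.

Section Apex.
Variables (k : T) (s : seq T).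
Hypothesis Ir : induced_cycle e (a :: k :: b :: s).

Lemma apex_nbhd : {in a :: k :: b :: s, forall v, e k v = (v == a) || (v == b)}.
Proof.
case/and4P: Ir => Ur _ Cr /allP Dr v vr.
have [eak ekb] : e a k /\ e k b by move: Cr => /= /and3P [].
have ab : a != b by apply: contraTneq Ur => ->; rewrite /= !inE eqxx !orbT.
have sub : [set a; b] \subset nbhd e (a :: k :: b :: s) k.
  apply/subsetP => u; rewrite in_set2 in_nbhd !inE => /orP [] /eqP ->.
    by rewrite eqxx e_sym.
  by rewrite eqxx !orbT.
have nbE : nbhd e (a :: k :: b :: s) k = [set a; b].
  apply/eqP; rewrite eq_sym eqEcard sub cards2 ab.
  by apply: Dr; rewrite !inE eqxx orbT.
by have := in_nbhd e (a :: k :: b :: s) k v; rewrite nbE in_set2 vr /= => ->.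
Qed.

(* a, k, b is a triangle of g, so it lies in K. *)
Lemma apex_in_clique : [/\ a \in K, k \in K & b \in K].
Proof.
case/and4P: Ir => _ _ /= /and3P [eak ekb _] _.
exact: (triangle_in_clique Sg Ig K_unique (del_edge_sub eak) (del_edge_sub ekb) gab).
Qed.

(* The cycle has length at least 5: a fourth vertex z would also form a
   triangle with a and b, hence lie in K and be adjacent to k. *)
Lemma apex_cycle_long : 2 <= size s.
Proof.
have := apex_nbhd; have := apex_in_clique; case/and4P: Ir.
case: s => [|z [|w s']] //= Ur _ /and4P [_ _ ebz /andP [eza _]] _ [_ kK _] nbk.
have gba : g b a by rewrite Sg.
have [_ zK _] := triangle_in_clique Sg Ig K_unique (del_edge_sub ebz) (del_edge_sub eza) gba.
move: Ur; rewrite /= !inE !negb_or => /and4P [/and3P [ak _ az] /andP [kb kz] bz _].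
have ekz : e k z.
  by rewrite del_edge_eq ?K_clique // ?(negbTE kb) ?andbF // [k == a]eq_sym (negbTE ak).
have := nbk z; rewrite !inE eqxx !orbT ekz [z == a]eq_sym (negbTE az) [z == b]eq_sym (negbTE bz).
by move/(_ isT).
Qed.

(* Read backwards, the cycle's long side a s b, closed by ab, is a hole of
   g through ab, hence it is H. *)
Lemma apex_hole : [set u in a :: rev s ++ [:: b]] = H.
Proof.
have Ir' : induced_cycle e (a :: rev s ++ b :: rev [:: k]).
  by rewrite -(induced_cycle_reverse a [:: k] s b e_sym).
have rs_ge2 : 2 <= size (rev s) by rewrite size_rev apex_cycle_long.
by apply: H_unique (closing_hole Sg gab Ir' rs_ge2) _ _; rewrite mem_side eqxx ?orbT.
Qed.

Lemma apex_hole_edges (H' : {set T}) : H' =i a :: k :: b :: s ->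
  hole_edges e H' =
  ((hole_edges g H :\ (a, b)) :\ (b, a)) :|: [set (a, k); (k, a); (b, k); (k, b)].
Proof.
move=> H'r.
have memH u : (u \in H) = [|| u == a, u \in s | u == b] by rewrite -apex_hole mem_side mem_rev.
have H'E : H' = k |: H.
  apply/setP => u; rewrite H'r in_setU1 memH !inE.
  by case: (u == a); case: (u == k); case: (u == b); case: (u \in s).
have kH : k \notin H.
  case/and4P: Ir; rewrite /= !inE !negb_or => /and4P [/and3P [ak _ _] /andP [kb ks] _ _] _ _ _.
  by rewrite memH [k == a]eq_sym (negbTE ak) (negbTE kb) (negbTE ks).
rewrite H'E hole_edges_apex // ?memH ?eqxx ?orbT //.
by move=> v vH; apply: apex_nbhd; rewrite -H'r H'E.
Qed.

End Apex.

Lemma new_hole_shape H' : is_hole e H' -> ~ is_hole g H' ->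
  exists k s, H' =i a :: k :: b :: s /\ induced_cycle e (a :: k :: b :: s).
Proof.
move=> H'e H'g.
have /andP [aH' bH'] : (a \in H') && (b \in H').
  by apply/negPn/negP => abN; apply: H'g (hole_del_edge_old Sg H'e abN).
have [p H'p Ip] := (holeP _ e_sym).1 H'e.
have ab : a != b by apply: contraTneq gab => ->; rewrite Ig.
case: (rot_to (_ : a \in p)) => [|i q rE]; first by rewrite -H'p.
have bq : b \in q.
  by move: (mem_rot i p b); rewrite rE in_cons [b == a]eq_sym (negbTE ab) -H'p bH' /= => ->.
case/splitPr: bq rE => s1 s2 rE.
have Ir : induced_cycle e (a :: s1 ++ b :: s2) by rewrite -rE induced_cycle_rot.
have H'r : H' =i a :: s1 ++ b :: s2 by move=> u; rewrite -rE mem_rot H'p.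
clear rE; case: (split_cycle_short Ir) => [s1_1 | s2_1].
  by case: s1 s1_1 Ir H'r => [|k []] // _ Ir H'r; exists k, s2.
case: s2 s2_1 Ir H'r => [|z []] // _ Ir H'r; exists z, (rev s1); split.
  by move=> u; rewrite H'r mem_reverse_cycle.
by rewrite (induced_cycle_reverse _ _ _ _ e_sym) in Ir.
Qed.

Lemma new_hole_form H' : H' \in holes e -> H' \notin holes g ->
  [/\ a \in K, b \in K & exists2 k, k \in K & hole_edges e H' =
     ((hole_edges g H :\ (a, b)) :\ (b, a)) :|: [set (a, k); (k, a); (b, k); (k, b)]].
Proof.
move=> /in_holes H'e /negP H'g; have H'g' : ~ is_hole g H' by move/in_holes.
have [k [s [H'r Ir]]] := new_hole_shape H'e H'g'.
have [aK kK bK] := apex_in_clique Ir.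
by split=> //; exists k => //; apply: (apex_hole_edges Ir H'r).
Qed.

End NewHoles.

Lemma hole_through_edge (T : finType) (g : rel T) (H C : {set T}) a b :
  (forall S1 S2, S1 \in holes g -> S2 \in holes g -> S1 != S2 ->
     [disjoint hole_edges g S1 & hole_edges g S2]) ->
  H \in holes g -> (a, b) \in hole_edges g H -> is_hole g C -> a \in C -> b \in C -> C = H.
Proof.
move=> disj HH abH /in_holes CH aC bC.
have abC : (a, b) \in hole_edges g C.
  by move: abH; rewrite !in_hole_edges aC bC => /and3P [].
apply/eqP; apply: contraTT abH => CH_neq.
by rewrite (disjointFr (disj _ _ CH HH CH_neq) abC).
Qed.

Theorem lemma4 (T : finType) (g : rel T) (h : nat) (K H : {set T}) (a b : T) :
  simple_graph g ->
  connected_graph g ->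
  #|holes g| = h ->
  (forall S1 S2, S1 \in holes g -> S2 \in holes g -> S1 != S2 ->
     [disjoint hole_edges g S1 & hole_edges g S2]) ->
  is_maximal_clique g K -> non_edge_clique K ->
  (forall K', is_maximal_clique g K' -> non_edge_clique K' -> K' = K) ->
  H \in holes g -> (a, b) \in hole_edges g H ->
  h <= #|holes (del_edge g a b)| ->
  (a \in K /\ b \in K) /\
  (forall H', H' \in holes (del_edge g a b) -> H' \notin holes g ->
     exists2 k, k \in K &
       hole_edges (del_edge g a b) H' =
       ((hole_edges g H :\ (a, b)) :\ (b, a)) :|: [set (a, k); (k, a); (b, k); (k, b)]).
Proof.
move=> [Sg Ig] _ card_h disj [K_clique _] _ K_unique HH abH h_le.
have [aH bH gab] : [/\ a \in H, b \in H & g a b] by apply/and3P; rewrite -in_hole_edges.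
have H_unique C : is_hole g C -> a \in C -> b \in C -> C = H.
  exact: hole_through_edge disj HH abH.
have new_hole := new_hole_form Sg Ig gab K_clique K_unique H_unique.
split; last by move=> H' H'e H'g; case: (new_hole H' H'e H'g).
have H_gone : H \notin holes (del_edge g a b).
  have H_hole : is_hole g H by apply/in_holes.
  by apply/negP => /in_holes; apply: (hole_destroyed Sg H_hole aH bH gab).
have [|H' H'e H'g] := card_new_element _ HH H_gone; first by rewrite card_h.
by case: (new_hole H' H'e H'g).
Qed.
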